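(* For integers $n$ and $\lceil n/2\rceil\le j\le n$ let $$B_j=\Big(\frac{n!}{(n-j)!}\Big)^2\frac{1}{j!}\Big(1-\frac{j}{n}\Big)^{n\log n},$$ and set $\varphi_2(n)=\sum_{j=\lceil n/2\rceil}^{n}B_j$. Then for $n\ge 9$, $$\varphi_2(n)\le\exp\Big\{1-\tfrac{3}{1000}\,n\log n\Big\}.$$
   Context: $\log$ denotes the natural logarithm. *)

From Stdlib Require Import Reals Lra Lia Arith.
Open Scope R_scope.

(* Real power x^y for x >= 0, with the convention 0^y = 0 (y > 0).
   Stdlib's Rpower 0 y = exp (y * ln 0) = 1, hence this wrapper. *)
Definition rpow (x y : R) : R := if Req_EM_T x 0 then 0 else Rpower x y.

Definition B (n j : nat) : R :=
  (INR (fact n) / INR (fact (n - j))) ^ 2 * / INR (fact j)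
  * rpow (1 - INR j / INR n) (INR n * ln (INR n)).

Definition ceil_half (n : nat) : nat := Nat.div (n + 1) 2.

(* phi_2(n) = sum_{j = ceil(n/2)}^{n} B_j ; sum_f_R0 f m has m+1 terms *)
Definition phi2 (n : nat) : R :=
  sum_f_R0 (fun k => B n (k + ceil_half n)%nat) (n - ceil_half n).

(* Write L = log n and k = n - j, so 0 <= k <= n/2 for the indices of phi_2(n).

   Large n (n >= 40): every term is bounded by the same quantity.  Pairing the factors
   of n!/k! gives n!/k! <= c^j with c = (n+k+1)/2 (AM-GM), and j! >= e (j/e)^j, so
   B_j <= e^{-1} D^j (k/n)^{nL} with D = (7/6) e n.  Since log(2k/n) <= 2k/n - 1 and
   log D <= 2L, the exponent j log D + nL log(k/n) is largest at j = n/2, whence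
   B_j <= exp(n/2 log D - nL log 2 - 1); at most n such terms, log 2 >= 0.69 and
   L >= 7/2 give the claim.

   Small n (9 <= n <= 39): lowering the real exponent nL to an integer N <= nL can only
   increase each term, which then becomes an explicit rational number; an exact integer
   computation shows that the sum is at most 2 - 12n/1000, which is below the target
   because exp x >= 1 + x and L <= 4. *)

From Stdlib Require Import Reals Lra Lia Arith ZArith List.
Import ListNotations.
Open Scope R_scope.

Lemma exp_le_mono x y : x <= y -> exp x <= exp y.
Proof. intros [H | ->]; [left; apply exp_increasing, H | right; reflexivity]. Qed.

Lemma ln_le_mono x y : 0 < x -> x <= y -> ln x <= ln y.
Proof. intros Hx [H | ->]; [left; apply ln_increasing; assumption | right; reflexivity]. Qed.

Lemma ln_le_sub1 x : 0 < x -> ln x <= x - 1.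
Proof. intros Hx. pose proof (exp_ineq1_le (ln x)) as H. rewrite exp_ln in H; lra. Qed.

(* exp (N a) = (exp a)^N: evaluates exp at a rational point through a small one. *)
Lemma exp_mul_nat N a : exp (INR N * a) = exp a ^ N.
Proof.
  induction N as [|N IH]; [simpl; rewrite Rmult_0_l, exp_0; reflexivity|].
  rewrite S_INR, Rmult_plus_distr_r, Rmult_1_l, exp_plus, IH. simpl. ring.
Qed.

(* exp x <= 1/(1-x) on [0,1), from exp (-x) >= 1 - x. *)
Lemma exp_le_inv_1m x : 0 <= x < 1 -> exp x <= / (1 - x).
Proof.
  intros Hx. pose proof (exp_ineq1_le (- x)) as H. rewrite exp_Ropp in H.
  rewrite <- (Rinv_inv (exp x)). apply Rinv_le_contravar; lra.
Qed.

Lemma exp1_le : exp 1 <= 11/4.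
Proof.
  replace 1 with (INR 64 * (1/64)) by (simpl; lra). rewrite exp_mul_nat.
  apply Rle_trans with ((/ (1 - 1/64)) ^ 64); [|lra].
  apply pow_incr. split; [left; apply exp_pos | apply exp_le_inv_1m; lra].
Qed.

Lemma ln2_ge : 69/100 <= ln 2.
Proof.
  rewrite <- (ln_exp (69/100)). apply ln_le_mono; [apply exp_pos|].
  replace (69/100) with (INR 128 * (69/12800)) by (simpl; lra). rewrite exp_mul_nat.
  apply Rle_trans with ((/ (1 - 69/12800)) ^ 128); [|lra].
  apply pow_incr. split; [left; apply exp_pos | apply exp_le_inv_1m; lra].
Qed.

(* log x <= 4 on (0, 40], since exp 4 >= (1 + 1/8)^32 >= 40. *)
Lemma ln_le_4 x : 0 < x <= 40 -> ln x <= 4.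
Proof.
  intros Hx. rewrite <- (ln_exp 4). apply ln_le_mono; [lra|].
  assert (H : (1 + 1/8) ^ 32 <= exp 4).
  { replace 4 with (INR 32 * (1/8)) by (simpl; lra). rewrite exp_mul_nat.
    apply pow_incr. split; [lra | apply exp_ineq1_le]. }
  lra.
Qed.

(* log x >= 7/2 for x >= 40, since exp 7 <= (11/4)^7 <= 40^2. *)
Lemma ln_ge_7_2 x : 40 <= x -> 7/2 <= ln x.
Proof.
  intros Hx.
  assert (H : 7 <= ln (x ^ 2)).
  { rewrite <- (ln_exp 7). apply ln_le_mono; [apply exp_pos|].
    replace 7 with (INR 7 * 1) by (simpl; ring). rewrite exp_mul_nat.
    apply Rle_trans with ((11/4) ^ 7).
    - apply pow_incr. split; [left; apply exp_pos | apply exp1_le].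
    - simpl. nra. }
  rewrite ln_pow in H by lra. simpl in H. lra.
Qed.

(* Stirling-type lower bound m! >= e (m/e)^m, written without division.  The step uses
   (1 + 1/m)^m <= e. *)
Lemma fact_ge_stirling m : (1 <= m)%nat -> exp 1 * INR m ^ m <= INR (fact m) * exp 1 ^ m.
Proof.
  induction m as [|m IH]; intros Hm; [lia|].
  destruct (Nat.eq_dec m 0) as [->|Hm0]; [simpl; lra|].
  specialize (IH ltac:(lia)).
  assert (Hmp : 0 < INR m) by (apply lt_0_INR; lia).
  assert (He : 0 < exp 1) by apply exp_pos.
  assert (Hgrowth : (INR m + 1) ^ m <= exp 1 * INR m ^ m).
  { replace (INR m + 1) with (INR m * (1 + 1 / INR m)) by (field; lra).
    rewrite Rpow_mult_distr, Rmult_comm. apply Rmult_le_compat_r; [apply pow_le; lra|].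
    replace (exp 1) with (exp (1 / INR m) ^ m)
      by (rewrite <- exp_mul_nat; f_equal; field; lra).
    apply pow_incr. split; [|apply exp_ineq1_le].
    assert (0 < 1 / INR m) by (apply Rdiv_lt_0_compat; lra). lra. }
  change (fact (S m)) with (S m * fact m)%nat. rewrite mult_INR, S_INR. cbn [pow].
  assert (Hpos : 0 <= (INR m + 1) * exp 1) by nra.
  apply Rle_trans with ((INR m + 1) * exp 1 * (exp 1 * INR m ^ m)); [nra|].
  replace ((INR m + 1) * INR (fact m) * (exp 1 * exp 1 ^ m))
    with ((INR m + 1) * exp 1 * (INR (fact m) * exp 1 ^ m)) by ring.
  apply Rmult_le_compat_l; assumption.
Qed.

Lemma inv_fact_le m : (1 <= m)%nat -> / INR (fact m) <= / exp 1 * (exp 1 / INR m) ^ m.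
Proof.
  intros Hm. pose proof (fact_ge_stirling m Hm) as H.
  assert (Hmp : 0 < INR m) by (apply lt_0_INR; lia).
  assert (He : 0 < exp 1) by apply exp_pos.
  assert (Hf : 0 < INR (fact m)) by (apply lt_0_INR, lt_O_fact).
  assert (Hmm : 0 < INR m ^ m) by (apply pow_lt; lra).
  assert (Hem : 0 < exp 1 ^ m) by (apply pow_lt; lra).
  replace (/ exp 1 * (exp 1 / INR m) ^ m) with (/ (exp 1 * INR m ^ m / exp 1 ^ m))
    by (unfold Rdiv; rewrite Rpow_mult_distr, pow_inv; field; lra).
  apply Rinv_le_contravar; [apply Rdiv_lt_0_compat; nra|].
  apply Rmult_le_reg_r with (exp 1 ^ m); [lra|].
  unfold Rdiv. rewrite Rmult_assoc, Rinv_l, Rmult_1_r by lra. exact H.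
Qed.

(* AM-GM for the product (k+1)(k+2)...(k+m): pairing its extreme factors,
   (k+1)(k+m) <= c^2 with c = (2k+m+1)/2, gives (k+m)! <= k! c^m. *)
Lemma fact_shift_le k m : INR (fact (k + m)) <= INR (fact k) * ((2 * INR k + INR m + 1) / 2) ^ m.
Proof.
  revert k. induction m as [m IH] using (well_founded_induction lt_wf). intros k.
  destruct m as [|[|m]].
  - rewrite Nat.add_0_r. simpl. lra.
  - rewrite Nat.add_1_r. change (fact (S k)) with (S k * fact k)%nat.
    rewrite mult_INR, S_INR. simpl. lra.
  - specialize (IH m ltac:(lia) (S k)).
    replace (k + S (S m))%nat with (S (S k + m)) by lia.
    change (fact (S (S k + m))) with (S (S k + m) * fact (S k + m))%nat.
    change (fact (S k)) with (S k * fact k)%nat in IH.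
    rewrite !mult_INR in *. rewrite !S_INR, !plus_INR, !S_INR in *.
    set (c := (2 * INR k + (INR m + 1 + 1) + 1) / 2).
    replace ((2 * (INR k + 1) + INR m + 1) / 2) with c in IH by (unfold c; field).
    assert (Hk : 0 <= INR k) by apply pos_INR.
    assert (Hm : 0 <= INR m) by apply pos_INR.
    assert (Hf : 0 < INR (fact k)) by (apply lt_0_INR, lt_O_fact).
    assert (Hcm : 0 <= c ^ m) by (apply pow_le; unfold c; lra).
    assert (Hpair : (INR k + 1 + INR m + 1) * (INR k + 1) <= c * c) by (unfold c; nra).
    cbn [pow].
    apply Rle_trans with ((INR k + 1 + INR m + 1) * ((INR k + 1) * INR (fact k) * c ^ m));
      [apply Rmult_le_compat_l; [lra | exact IH]|].
    replace ((INR k + 1 + INR m + 1) * ((INR k + 1) * INR (fact k) * c ^ m))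
      with (((INR k + 1 + INR m + 1) * (INR k + 1)) * (INR (fact k) * c ^ m)) by ring.
    replace (INR (fact k) * (c * (c * c ^ m))) with ((c * c) * (INR (fact k) * c ^ m)) by ring.
    apply Rmult_le_compat_r; [apply Rmult_le_pos; lra | exact Hpair].
Qed.

Lemma ceil_half_le n : (ceil_half n <= n)%nat.
Proof. unfold ceil_half. destruct n; [simpl; lia|]. apply Nat.Div0.div_le_upper_bound; lia. Qed.

Lemma ceil_half_ge n : (n <= 2 * ceil_half n)%nat.
Proof.
  unfold ceil_half. pose proof (Nat.div_mod (n + 1) 2 ltac:(lia)).
  pose proof (Nat.mod_upper_bound (n + 1) 2 ltac:(lia)). lia.
Qed.

(* The quantity bounding e c^2 / j in the term estimate for large n. *)
Definition D (n : nat) : R := 7/6 * exp 1 * INR n.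

(* Factorial part of B_j for j >= n/2 and n >= 37: (n!/(n-j)!)^2 / j! <= e^{-1} D^j.
   With k = n - j and c = (n+k+1)/2: n!/k! <= c^j, 1/j! <= e^{-1} (e/j)^j, and
   c^2 <= (3n+2)^2/16 <= (7/6) n j. *)
Lemma factorial_part_le n j : (37 <= n)%nat -> (1 <= j <= n)%nat -> (n <= 2 * j)%nat ->
  (INR (fact n) / INR (fact (n - j))) ^ 2 * / INR (fact j) <= / exp 1 * D n ^ j.
Proof.
  intros Hn Hj H2j.
  set (k := (n - j)%nat).
  assert (Hnr : 37 <= INR n) by (replace 37 with (INR 37) by (simpl; lra); apply le_INR; lia).
  assert (Hjr : 1 <= INR j) by (replace 1 with (INR 1) by reflexivity; apply le_INR; lia).
  assert (Hnkj : INR n = INR k + INR j) by (rewrite <- plus_INR; f_equal; unfold k; lia).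
  assert (H2jr : INR n <= 2 * INR j)
    by (replace 2 with (INR 2) by reflexivity; rewrite <- mult_INR; apply le_INR; lia).
  assert (He : 0 < exp 1) by apply exp_pos.
  assert (Hfk : 0 < INR (fact k)) by (apply lt_0_INR, lt_O_fact).
  set (c := (2 * INR k + INR j + 1) / 2).
  assert (Hc : 0 < c) by (unfold c; pose proof (pos_INR k); lra).
  assert (Hratio : (INR (fact n) / INR (fact k)) ^ 2 <= (c ^ 2) ^ j).
  { rewrite <- pow_mult, Nat.mul_comm, pow_mult. apply pow_incr. split.
    - left. apply Rdiv_lt_0_compat; [apply lt_0_INR, lt_O_fact | lra].
    - apply Rmult_le_reg_r with (INR (fact k)); [lra|]. unfold Rdiv.
      rewrite Rmult_assoc, Rinv_l, Rmult_1_r by lra. rewrite Rmult_comm.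
      replace n with (k + j)%nat by (unfold k; lia). apply fact_shift_le. }
  assert (Hbase : c ^ 2 * (exp 1 / INR j) <= D n).
  { assert (Hc_le : c <= (3 * INR n + 2) / 4) by (unfold c; lra).
    assert (Hc2 : c ^ 2 <= 7/6 * INR n * INR j).
    { apply Rle_trans with (((3 * INR n + 2) / 4) ^ 2); [apply pow_incr; lra|]. nra. }
    unfold D, Rdiv. apply Rmult_le_reg_r with (INR j); [lra|].
    replace (c ^ 2 * (exp 1 * / INR j) * INR j) with (exp 1 * c ^ 2) by (field; lra).
    nra. }
  apply Rle_trans with ((c ^ 2) ^ j * (/ exp 1 * (exp 1 / INR j) ^ j)).
  - apply Rmult_le_compat; [apply pow2_ge_0 | left; apply Rinv_0_lt_compat, lt_0_INR, lt_O_fact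
      | exact Hratio | apply inv_fact_le; lia].
  - replace ((c ^ 2) ^ j * (/ exp 1 * (exp 1 / INR j) ^ j))
      with (/ exp 1 * (c ^ 2 * (exp 1 / INR j)) ^ j) by (rewrite Rpow_mult_distr; ring).
    apply Rmult_le_compat_l; [left; apply Rinv_0_lt_compat; lra|].
    apply pow_incr. split; [|exact Hbase].
    apply Rmult_le_pos; [apply pow2_ge_0 | left; apply Rdiv_lt_0_compat; lra].
Qed.

(* Maximisation of the exponent j log D + n L log(k/n) over j >= n/2 (n = k + j):
   by log(2k/n) <= 2k/n - 1 = (k-j)/n and log D <= 2L it is at most its value at j = n/2. *)
Lemma exponent_balance K J L lnD : 0 < K -> K <= J -> 0 <= L -> lnD <= 2 * L ->
  J * lnD + (K + J) * L * ln (K / (K + J)) <= (K + J) / 2 * lnD - (K + J) * L * ln 2.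
Proof.
  intros HK HKJ HL HD.
  assert (Hlog : ln (K / (K + J)) + ln 2 <= (K - J) / (K + J)).
  { rewrite <- ln_mult by (try apply Rdiv_lt_0_compat; lra).
    replace ((K - J) / (K + J)) with (K / (K + J) * 2 - 1) by (field; lra).
    apply ln_le_sub1. apply Rmult_lt_0_compat; [apply Rdiv_lt_0_compat|]; lra. }
  assert (Hscaled : (K + J) * L * (ln (K / (K + J)) + ln 2) <= L * (K - J)).
  { replace (L * (K - J)) with ((K + J) * L * ((K - J) / (K + J))) by (field; lra).
    apply Rmult_le_compat_l; [nra | exact Hlog]. }
  assert (HDJ : (J - K) / 2 * lnD <= (J - K) / 2 * (2 * L)) by (apply Rmult_le_compat_l; lra).
  nra.
Qed.

(* log D <= log n + 7/6, since log(7/6) <= 1/6. *)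
Lemma ln_D_le n : (1 <= n)%nat -> ln (D n) <= ln (INR n) + 7/6.
Proof.
  intros Hn. assert (Hnp : 0 < INR n) by (apply lt_0_INR; lia).
  unfold D. rewrite !ln_mult by (try apply exp_pos; try apply Rmult_lt_0_compat; try apply exp_pos; lra).
  rewrite ln_exp. pose proof (ln_le_sub1 (7/6) ltac:(lra)). lra.
Qed.

Definition term_bound (n : nat) : R :=
  exp (INR n / 2 * ln (D n) - INR n * ln (INR n) * ln 2 - 1).

(* The term j = n vanishes (0^{nL} = 0); otherwise factorial_part_le reduces B_j to
   e^{-1} exp(j log D + nL log(k/n)), which exponent_balance bounds. *)
Lemma B_le_term_bound n j : (40 <= n)%nat -> (ceil_half n <= j <= n)%nat -> B n j <= term_bound n.
Proof.
  intros Hn Hj. pose proof (ceil_half_ge n) as Hhalf.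
  assert (Hnp : 0 < INR n) by (apply lt_0_INR; lia).
  set (k := (n - j)%nat). set (L := ln (INR n)).
  assert (HL : 7/2 <= L) by (apply ln_ge_7_2; replace 40 with (INR 40) by (simpl; lra); apply le_INR; lia).
  assert (Hnkj : INR n = INR k + INR j) by (rewrite <- plus_INR; f_equal; unfold k; lia).
  assert (Hy : 1 - INR j / INR n = INR k / INR n)
    by (replace (INR k) with (INR n - INR j) by lra; field; lra).
  unfold B, rpow. rewrite Hy.
  destruct (Req_EM_T (INR k / INR n) 0) as [Hy0 | Hy0].
  { rewrite Rmult_0_r. left; apply exp_pos. }
  assert (Hk : 0 < INR k).
  { destruct k as [|k']; [exfalso; apply Hy0; simpl; unfold Rdiv; ring|].
    apply lt_0_INR; lia. }
  assert (Hfact := factorial_part_le n j ltac:(lia) ltac:(lia) ltac:(lia)).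
  apply Rle_trans with (/ exp 1 * D n ^ j * Rpower (INR k / INR n) (INR n * L)).
  { apply Rmult_le_compat_r; [left; apply exp_pos | exact Hfact]. }
  assert (HDp : 0 < D n) by (unfold D; pose proof (exp_pos 1); nra).
  rewrite <- (exp_ln (D n)) at 1 by exact HDp. rewrite <- exp_mul_nat.
  unfold Rpower, term_bound; fold L. rewrite Rmult_assoc, <- exp_plus.
  replace (exp (INR n / 2 * ln (D n) - INR n * L * ln 2 - 1))
    with (/ exp 1 * exp (INR n / 2 * ln (D n) - INR n * L * ln 2))
    by (unfold Rminus at 2; rewrite exp_plus, exp_Ropp; ring).
  apply Rmult_le_compat_l; [left; apply Rinv_0_lt_compat, exp_pos|].
  apply exp_le_mono. rewrite Hnkj.
  apply exponent_balance; [exact Hk | | lra |].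
  - apply le_INR. unfold k. lia.
  - pose proof (ln_D_le n ltac:(lia)). unfold L in *. lra.
Qed.

(* Final numerics for large n: n terms of size term_bound n fit under the target, using
   log D <= L + 7/6, log 2 >= 0.69 and L >= 7/2. *)
Lemma n_term_bound_le n : (40 <= n)%nat ->
  INR n * term_bound n <= exp (1 - 3 / 1000 * INR n * ln (INR n)).
Proof.
  intros Hn.
  assert (Hnr : 40 <= INR n) by (replace 40 with (INR 40) by (simpl; lra); apply le_INR; lia).
  set (L := ln (INR n)).
  assert (HL : 7/2 <= L) by (apply ln_ge_7_2; exact Hnr).
  pose proof (ln_D_le n ltac:(lia)) as HD. fold L in HD. pose proof ln2_ge as Hln2.
  unfold term_bound. fold L.
  replace (INR n * exp (INR n / 2 * ln (D n) - INR n * L * ln 2 - 1))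
    with (exp (INR n / 2 * ln (D n) - INR n * L * ln 2 - 1 + L))
    by (rewrite exp_plus; unfold L; rewrite exp_ln by lra; ring).
  apply exp_le_mono.
  assert (H1 : INR n / 2 * ln (D n) <= INR n / 2 * (L + 7/6)) by (apply Rmult_le_compat_l; lra).
  assert (H2 : INR n * L * (ln 2 - 69/100) >= 0) by (apply Rle_ge, Rmult_le_pos; nra).
  assert (H3 : (L - 7/2) * (187/1000 * INR n - 1) >= 0) by (apply Rle_ge, Rmult_le_pos; lra).
  nra.
Qed.

(* Proposition 4.4 for n >= 40: phi_2(n) has at most n terms, each at most term_bound n. *)
Lemma phi2_large n : (40 <= n)%nat -> phi2 n <= exp (1 - 3 / 1000 * INR n * ln (INR n)).
Proof.
  intros Hn. pose proof (ceil_half_le n). pose proof (ceil_half_ge n).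
  unfold phi2. eapply Rle_trans.
  { apply sum_Rle with (Bn := fun _ => term_bound n). intros i Hi. apply B_le_term_bound; lia. }
  rewrite sum_cte. eapply Rle_trans; [|apply n_term_bound_le, Hn].
  rewrite Rmult_comm. apply Rmult_le_compat_r; [left; apply exp_pos | apply le_INR; lia].
Qed.

Definition B_int (n j N : nat) : R :=
  (INR (fact n) / INR (fact (n - j))) ^ 2 * / INR (fact j) * (INR (n - j) / INR n) ^ N.

(* Since 0 <= 1 - j/n <= 1, lowering the exponent can only increase B_j. *)
Lemma B_le_B_int n j N : (1 <= n)%nat -> (j <= n)%nat -> INR N <= INR n * ln (INR n) ->
  B n j <= B_int n j N.
Proof.
  intros Hn Hj HN. unfold B, B_int, rpow.
  assert (Hnp : 0 < INR n) by (apply lt_0_INR; lia).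
  assert (Hy : 1 - INR j / INR n = INR (n - j) / INR n) by (rewrite minus_INR by lia; field; lra).
  rewrite Hy. set (y := INR (n - j) / INR n).
  assert (Hcoef : 0 <= (INR (fact n) / INR (fact (n - j))) ^ 2 * / INR (fact j)).
  { apply Rmult_le_pos; [apply pow2_ge_0 | left; apply Rinv_0_lt_compat, lt_0_INR, lt_O_fact]. }
  assert (Hy0 : 0 <= y) by (apply Rmult_le_pos; [apply pos_INR | left; apply Rinv_0_lt_compat, Hnp]).
  assert (Hy1 : y <= 1).
  { unfold y. apply Rmult_le_reg_r with (INR n); [lra|]. unfold Rdiv.
    rewrite Rmult_assoc, Rinv_l, Rmult_1_r, Rmult_1_l by lra. apply le_INR; lia. }
  destruct (Req_EM_T y 0) as [Hy00 | Hy00].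
  - rewrite Rmult_0_r. apply Rmult_le_pos; [exact Hcoef | apply pow_le, Hy0].
  - apply Rmult_le_compat_l; [exact Hcoef|].
    rewrite <- (Rpower_pow N y) by lra. unfold Rpower. apply exp_le_mono.
    assert (ln y <= 0) by (rewrite <- ln_1; apply ln_le_mono; lra).
    nra.
Qed.

Fixpoint zfact (n : nat) : Z :=
  match n with O => 1%Z | S m => (Z.of_nat (S m) * zfact m)%Z end.

Lemma INR_fact_zfact n : INR (fact n) = IZR (zfact n).
Proof.
  induction n as [|n IH]; [reflexivity|].
  change (fact (S n)) with (S n * fact n)%nat. rewrite mult_INR, IH, INR_IZR_INZ.
  change (zfact (S n)) with (Z.of_nat (S n) * zfact n)%Z. rewrite mult_IZR. reflexivity.
Qed.

Lemma zfact_pos n : 0 < IZR (zfact n).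
Proof. rewrite <- INR_fact_zfact. apply lt_0_INR, lt_O_fact. Qed.

(* Denominator (n-j)!^2 j! of the coefficient of B_int, and n^N B_int as an integer
   (the coefficient is the integer (n!/(n-j)!) * binomial(n, j); its integrality is
   checked by computation rather than proved). *)
Definition coeff_den (n j : nat) : Z := (zfact (n - j) * zfact (n - j) * zfact j)%Z.

Definition B_int_num (n j N : nat) : Z :=
  ((zfact n * zfact n) / coeff_den n j * Z.of_nat (n - j) ^ Z.of_nat N)%Z.

Lemma B_int_exact n j N : (1 <= n)%nat -> ((zfact n * zfact n) mod coeff_den n j = 0)%Z ->
  B_int n j N = IZR (B_int_num n j N) / IZR (Z.of_nat n ^ Z.of_nat N).
Proof.
  intros Hn Hdiv.
  pose proof (zfact_pos (n - j)). pose proof (zfact_pos j). pose proof (zfact_pos n).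
  assert (Hden : IZR (coeff_den n j) <> 0).
  { unfold coeff_den. rewrite !mult_IZR. apply Rgt_not_eq.
    repeat apply Rmult_lt_0_compat; assumption. }
  assert (Hquot : IZR (zfact n) * IZR (zfact n) =
                  IZR (coeff_den n j) * IZR (zfact n * zfact n / coeff_den n j)).
  { rewrite <- !mult_IZR. f_equal. rewrite (Z_div_mod_eq_full (zfact n * zfact n) (coeff_den n j)) at 1.
    rewrite Hdiv. ring. }
  unfold coeff_den in Hquot, Hden. rewrite !mult_IZR in Hquot, Hden.
  unfold B_int, B_int_num, coeff_den. rewrite mult_IZR, <- !pow_IZR, <- !INR_IZR_INZ, !INR_fact_zfact.
  assert (Hnp : 0 < INR n) by (apply lt_0_INR; lia).
  assert (HnN : 0 < INR n ^ N) by (apply pow_lt; lra).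
  set (q := IZR (zfact n * zfact n / (zfact (n - j) * zfact (n - j) * zfact j))) in *.
  unfold Rdiv. rewrite !Rpow_mult_distr, !pow_inv.
  replace (IZR (zfact n) ^ 2) with (IZR (zfact n) * IZR (zfact n)) by ring.
  rewrite Hquot. field. repeat split; lra.
Qed.

Fixpoint zsum (f : nat -> Z) (t : nat) : Z :=
  match t with O => f O | S u => (zsum f u + f t)%Z end.

Lemma IZR_zsum f t : IZR (zsum f t) = sum_f_R0 (fun i => IZR (f i)) t.
Proof. induction t as [|t IH]; simpl; [reflexivity|]. rewrite plus_IZR, IH. reflexivity. Qed.

(* A certificate that phi_2(n) <= 2 - 12n/1000 using the integer exponent N:
   11^N <= 4^N n^n (so that N <= n log n, as e <= 11/4), integrality of the
   coefficients, and the bound on the exactly evaluated sum of the B_int. *)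
Definition small_case_certificate (n N : nat) : bool :=
  (11 ^ Z.of_nat N <=? 4 ^ Z.of_nat N * Z.of_nat n ^ Z.of_nat n)%Z &&
  forallb (fun j => (zfact n * zfact n) mod coeff_den n j =? 0)%Z
    (seq (ceil_half n) (S (n - ceil_half n))) &&
  (1000 * zsum (fun i => B_int_num n (i + ceil_half n) N) (n - ceil_half n) <=?
     (2000 - 12 * Z.of_nat n) * Z.of_nat n ^ Z.of_nat N)%Z.

(* 11^N <= 4^N n^n implies N <= n log n, because exp N <= (11/4)^N. *)
Lemma exponent_le_nlogn n N : (1 <= n)%nat ->
  (11 ^ Z.of_nat N <= 4 ^ Z.of_nat N * Z.of_nat n ^ Z.of_nat n)%Z ->
  INR N <= INR n * ln (INR n).
Proof.
  intros Hn H. apply IZR_le in H. rewrite mult_IZR, <- !pow_IZR, <- INR_IZR_INZ in H.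
  assert (Hnp : 0 < INR n) by (apply lt_0_INR; lia).
  rewrite <- ln_pow, <- (ln_exp (INR N)) by lra. apply ln_le_mono; [apply exp_pos|].
  rewrite <- (Rmult_1_r (INR N)), exp_mul_nat.
  assert (H4 : 0 < IZR 4 ^ N) by (apply pow_lt; lra).
  apply Rmult_le_reg_r with (IZR 4 ^ N); [exact H4|].
  apply Rle_trans with ((11/4 * IZR 4) ^ N).
  - rewrite Rpow_mult_distr. apply Rmult_le_compat_r; [lra|].
    apply pow_incr. split; [left; apply exp_pos | apply exp1_le].
  - replace (11/4 * IZR 4) with (IZR 11) by lra. lra.
Qed.

(* For n <= 40 (log n <= 4) the target exceeds 2 - 12n/1000, by exp x >= 1 + x. *)
Lemma target_ge_small n : (1 <= n <= 40)%nat ->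
  (2000 - 12 * INR n) / 1000 <= exp (1 - 3 / 1000 * INR n * ln (INR n)).
Proof.
  intros Hn.
  assert (Hnp : 0 < INR n) by (apply lt_0_INR; lia).
  assert (Hn40 : INR n <= 40) by (replace 40 with (INR 40) by (simpl; lra); apply le_INR; lia).
  pose proof (ln_le_4 (INR n) ltac:(lra)).
  pose proof (exp_ineq1_le (1 - 3 / 1000 * INR n * ln (INR n))).
  assert (INR n * ln (INR n) <= INR n * 4) by (apply Rmult_le_compat_l; lra).
  lra.
Qed.

Lemma phi2_small n N : (1 <= n <= 40)%nat -> small_case_certificate n N = true ->
  phi2 n <= exp (1 - 3 / 1000 * INR n * ln (INR n)).
Proof.
  intros Hn Hcert. unfold small_case_certificate in Hcert.
  apply andb_prop in Hcert as [Hcert Hsum]. apply andb_prop in Hcert as [HN Hdiv].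
  apply Z.leb_le, exponent_le_nlogn in HN; [|lia].
  rewrite forallb_forall in Hdiv. apply Z.leb_le, IZR_le in Hsum.
  pose proof (ceil_half_le n).
  assert (HnN : 0 < INR n ^ N) by (apply pow_lt, lt_0_INR; lia).
  set (t := (n - ceil_half n)%nat) in *.
  unfold phi2. fold t. eapply Rle_trans.
  { apply sum_Rle with (Bn := fun i => B_int n (i + ceil_half n) N).
    intros i Hi. apply B_le_B_int; [lia | unfold t in Hi; lia | exact HN]. }
  rewrite (sum_eq _ (fun i => IZR (B_int_num n (i + ceil_half n) N) * / INR n ^ N)).
  2:{ intros i Hi. rewrite B_int_exact; [|lia|].
      - rewrite <- pow_IZR, <- INR_IZR_INZ. reflexivity.
      - apply Z.eqb_eq, Hdiv, in_seq. unfold t in Hi. lia. }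
  rewrite <- scal_sum, <- IZR_zsum.
  rewrite !mult_IZR, minus_IZR, mult_IZR, <- pow_IZR, <- !INR_IZR_INZ in Hsum.
  eapply Rle_trans; [|apply target_ge_small, Hn].
  apply Rmult_le_reg_r with (1000 * INR n ^ N); [lra|].
  replace (/ INR n ^ N * IZR (zsum (fun i => B_int_num n (i + ceil_half n) N) t) * (1000 * INR n ^ N))
    with (1000 * IZR (zsum (fun i => B_int_num n (i + ceil_half n) N) t)) by (field; lra).
  replace ((2000 - 12 * INR n) / 1000 * (1000 * INR n ^ N)) with ((2000 - 12 * INR n) * INR n ^ N)
    by field.
  exact Hsum.
Qed.

(* The integer exponents used for 9 <= n <= 39: the largest N with 11^N <= 4^N n^n. *)
Definition small_exponent (n : nat) : nat :=
  nth (n - 9) [19; 22; 26; 29; 32; 36; 40; 43; 47; 51; 55; 59; 63; 67; 71; 75; 79; 83; 87;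
               92; 96; 100; 105; 109; 114; 118; 123; 127; 132; 136; 141]%nat 0%nat.

Lemma small_certificates n : (9 <= n < 40)%nat -> small_case_certificate n (small_exponent n) = true.
Proof.
  intros Hn.
  assert (Hall : forallb (fun m => small_case_certificate m (small_exponent m)) (seq 9 31) = true)
    by (vm_compute; reflexivity).
  rewrite forallb_forall in Hall. apply Hall, in_seq. lia.
Qed.

Theorem proposition4p4 (n : nat) (hn : (9 <= n)%nat) :
  phi2 n <= exp (1 - 3 / 1000 * INR n * ln (INR n)).
Proof.
  destruct (le_lt_dec 40 n) as [Hlarge | Hsmall].
  - exact (phi2_large n Hlarge).
  - apply (phi2_small n (small_exponent n)); [lia | apply small_certificates; lia].
Qed.
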